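(* Let $0<q<1$. For every complex number $z$, $$|A_q(z)|\le e^{q|z|/(1-q)},$$ and for every complex number $z\neq 0$, $$|A_q(z)|\le \frac{\left(\frac{|z|}{\sqrt q}\right)^{1/2}\exp\left\{-\frac{\log^2|z|}{4\log q}\right\}}{(q;q)_\infty}.$$
   Context: Notation: $(a;q)_0:=1$, $(a;q)_k:=\prod_{j=0}^{k-1}(1-aq^j)$, $(a;q)_\infty:=\prod_{j=0}^{\infty}(1-aq^j)$. Ramanujan's function is the entire function $A_q(z):=\sum_{k=0}^{\infty}\frac{q^{k^2}}{(q;q)_k}(-z)^k$. Logarithms and powers are principal branches (here only applied to positive reals). *)

From Stdlib Require Import Reals.
From Coquelicot Require Import Coquelicot.
Open Scope R_scope.

Fixpoint qpoch (a q : R) (k : nat) : R :=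
  match k with
  | O => 1
  | S k' => qpoch a q k' * (1 - a * q ^ k')
  end.

Definition qpoch_inf (a q : R) : R := Lim_seq (fun k => qpoch a q k).

Definition A_term (q : R) (z : C) (k : nat) : C :=
  Cmult (RtoC (q ^ (k * k) / qpoch q q k)) (Cpow (Copp z) k).

(* A_q(z) = sum_k A_term; the complex series is summed componentwise
   (real and imaginary parts), which is its sum whenever it converges. *)
Definition A_q (q : R) (z : C) : C :=
  (Series (fun k => Re (A_term q z k)), Series (fun k => Im (A_term q z k))).

(* Both bounds come from |A_q(z)| <= sum_k q^(k^2) |z|^k / (q;q)_k.
   For the first, 1 - q^j >= j (1 - q) q^(j-1) gives
   (q;q)_k >= k! (1-q)^k q^(k(k-1)/2), so the k-th coefficient is at most
   (q/(1-q))^k / k! and the series is dominated by that of the exponential.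
   For the second, completing the square in k gives
   q^(k^2) r^k <= q^k (r/sqrt q)^(1/2) exp(-log^2 r / (4 log q)), and the
   remaining sum telescopes: sum_(k<=N) q^k/(q;q)_k = 1/(q;q)_N <= 1/(q;q)_oo. *)

From Stdlib Require Import Reals Lra Lia Psatz.
From Coquelicot Require Import Coquelicot.
Open Scope R_scope.

Lemma exp_le_exp (a b : R) : a <= b -> exp a <= exp b.
Proof.
intros [Hab | ->]; [left; exact (exp_increasing _ _ Hab) | right; reflexivity].
Qed.

Lemma ln_sqrt (x : R) : 0 < x -> ln (sqrt x) = ln x / 2.
Proof.
intros Hx. rewrite <- Rpower_sqrt by exact Hx. unfold Rpower. rewrite ln_exp. field.
Qed.

Lemma pow_unit_interval (q : R) (n : nat) : 0 <= q <= 1 -> 0 <= q ^ n <= 1.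
Proof.
intros Hq. split; [apply pow_le; lra|].
rewrite <- (pow1 n). apply pow_incr; lra.
Qed.

Lemma one_sub_pow_S_ge (q : R) (k : nat) : 0 <= q <= 1 ->
  (INR k + 1) * (1 - q) * q ^ k <= 1 - q ^ S k.
Proof.
intros Hq. induction k as [|k IH].
- simpl. lra.
- rewrite S_INR. cbn [pow] in *.
  pose proof (pow_unit_interval q k Hq). pose proof (pos_INR k).
  assert (0 <= (INR k + 1) * (1 - q) * q ^ k) by (apply Rmult_le_pos; nra).
  nra.
Qed.

Lemma quadratic_le_vertex (L l x : R) : L < 0 ->
  x * x * L + x * l <= x * L + (l - L / 2) / 2 - l ^ 2 / (4 * L).
Proof.
intros HL.
assert (E : x * L + (l - L / 2) / 2 - l ^ 2 / (4 * L) - (x * x * L + x * l)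
            = - L * (x - / 2 + l / (2 * L)) ^ 2) by (field; lra).
assert (0 <= - L * (x - / 2 + l / (2 * L)) ^ 2)
  by (apply Rmult_le_pos; [lra | apply pow2_ge_0]).
lra.
Qed.

Lemma Rabs_Im_le_Cmod (c : C) : Rabs (Im c) <= Cmod c.
Proof.
destruct c as [a b]; unfold Cmod; simpl.
rewrite <- sqrt_Rsqr_abs. apply sqrt_le_1_alt. unfold Rsqr. nra.
Qed.

Lemma Cmod_sum_parts_le (t : nat -> C) (N : nat) :
  Cmod (sum_f_R0 (fun k => Re (t k)) N, sum_f_R0 (fun k => Im (t k)) N)
  <= sum_f_R0 (fun k => Cmod (t k)) N.
Proof.
induction N as [|N IH]; simpl.
- destruct (t 0%nat); apply Rle_refl.
- eapply Rle_trans; [|apply Rplus_le_compat_r, IH].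
  destruct (t (S N)) as [a b].
  exact (Cmod_triangle (_, _) (a, b)).
Qed.

Lemma Cmod_le_lim (u v : nat -> R) (a b B : R) :
  is_lim_seq u a -> is_lim_seq v b -> (forall n, Cmod (u n, v n) <= B) ->
  Cmod (a, b) <= B.
Proof.
intros Hu Hv HB.
assert (Hsq : is_lim_seq (fun n => u n ^ 2 + v n ^ 2) (a ^ 2 + b ^ 2)).
{ apply (is_lim_seq_plus' _ _ (a ^ 2) (b ^ 2)).
  - apply (is_lim_seq_ext (fun n => u n * (u n * 1))); [reflexivity|].
    apply is_lim_seq_mult'; [exact Hu|].
    apply is_lim_seq_mult'; [exact Hu | apply is_lim_seq_const].
  - apply (is_lim_seq_ext (fun n => v n * (v n * 1))); [reflexivity|].
    apply is_lim_seq_mult'; [exact Hv|].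
    apply is_lim_seq_mult'; [exact Hv | apply is_lim_seq_const]. }
assert (Hmod : is_lim_seq (fun n => Cmod (u n, v n)) (Cmod (a, b))).
{ apply (is_lim_seq_continuous sqrt _ _); [|exact Hsq].
  apply continuity_pt_sqrt; nra. }
exact (is_lim_seq_le _ _ _ _ HB Hmod (is_lim_seq_const B)).
Qed.

Lemma Cmod_series_parts_le (t : nat -> C) (B : R) :
  (forall N, sum_f_R0 (fun k => Cmod (t k)) N <= B) ->
  Cmod (Series (fun k => Re (t k)), Series (fun k => Im (t k))) <= B.
Proof.
intros HB.
assert (Habs : ex_series (fun k => Cmod (t k))).
{ apply (ex_finite_lim_seq_incr _ B).
  - intros n. rewrite sum_Sn. pose proof (Cmod_ge_0 (t (S n))).
    unfold plus; simpl; lra.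
  - intros n. rewrite sum_n_Reals. apply HB. }
assert (Hre : ex_series (fun k => Re (t k))).
{ apply (@ex_series_le R_AbsRing R_CompleteNormedModule _ (fun k => Cmod (t k)));
    [|exact Habs].
  intros n. apply re_le_Cmod. }
assert (Him : ex_series (fun k => Im (t k))).
{ apply (@ex_series_le R_AbsRing R_CompleteNormedModule _ (fun k => Cmod (t k)));
    [|exact Habs].
  intros n. apply Rabs_Im_le_Cmod. }
apply (Cmod_le_lim _ _ _ _ _ (Series_correct _ Hre) (Series_correct _ Him)).
intros N. rewrite !sum_n_Reals.
eapply Rle_trans; [apply Cmod_sum_parts_le | apply HB].
Qed.

Lemma qpoch_add (a q : R) (m n : nat) :
  qpoch a q (m + n) = qpoch a q m * qpoch (a * q ^ m) q n.
Proof.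
induction n as [|n IH]; simpl.
- rewrite Nat.add_0_r; ring.
- rewrite Nat.add_succ_r; simpl. rewrite IH, pow_add. ring.
Qed.

Lemma qpoch_pos (a q : R) (n : nat) :
  0 <= a < 1 -> 0 <= q <= 1 -> 0 < qpoch a q n.
Proof.
intros Ha Hq. induction n as [|n IH]; simpl; [lra|].
pose proof (pow_unit_interval q n Hq).
apply Rmult_lt_0_compat; [exact IH | nra].
Qed.

Lemma qpoch_unit_interval (a q : R) (n : nat) :
  0 <= a <= 1 -> 0 <= q <= 1 -> 0 <= qpoch a q n <= 1.
Proof.
intros Ha Hq. induction n as [|n IH]; simpl; [lra|].
pose proof (pow_unit_interval q n Hq).
assert (0 <= 1 - a * q ^ n <= 1) by nra.
split; nra.
Qed.

Lemma qpoch_add_le (a q : R) (m n : nat) :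
  0 <= a <= 1 -> 0 <= q <= 1 -> qpoch a q (m + n) <= qpoch a q m.
Proof.
intros Ha Hq. rewrite qpoch_add.
pose proof (pow_unit_interval q m Hq).
pose proof (qpoch_unit_interval a q m Ha Hq).
assert (Haq : 0 <= a * q ^ m <= 1) by nra.
pose proof (qpoch_unit_interval _ q n Haq Hq).
nra.
Qed.

(* Weierstrass' inequality  prod (1 - x_j) >= 1 - sum x_j. *)
Lemma qpoch_ge_geometric (a q : R) (n : nat) :
  0 <= a <= 1 -> 0 <= q < 1 -> 1 - a * (1 - q ^ n) / (1 - q) <= qpoch a q n.
Proof.
intros Ha Hq. induction n as [|n IH]; simpl.
- unfold Rdiv. rewrite Rminus_diag, Rmult_0_r, Rmult_0_l. lra.
- pose proof (pow_unit_interval q n ltac:(lra)).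
  pose proof (qpoch_unit_interval a q n Ha ltac:(lra)).
  assert (E : 1 - a * (1 - q * q ^ n) / (1 - q)
              = 1 - a * (1 - q ^ n) / (1 - q) - a * q ^ n) by (field; lra).
  rewrite E.
  assert (0 <= a * q ^ n) by nra.
  assert (qpoch a q n * (a * q ^ n) <= a * q ^ n) by nra.
  lra.
Qed.

(* Split off J factors with q^J <= (1 - q)/2: the tail (a q^J; q)_n stays >= 1/2. *)
Lemma qpoch_lower_bound (a q : R) :
  0 <= a < 1 -> 0 <= q < 1 -> exists c, 0 < c /\ forall n, c <= qpoch a q n.
Proof.
intros Ha Hq.
destruct (pow_lt_1_zero q ltac:(rewrite Rabs_pos_eq; lra) ((1 - q) / 2)
  ltac:(lra)) as [J HJ].
specialize (HJ J (le_n J)). rewrite Rabs_pos_eq in HJ by (apply pow_le; lra).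
exists (qpoch a q J / 2). split.
- pose proof (qpoch_pos a q J Ha ltac:(lra)). lra.
- intros n.
  pose proof (pow_unit_interval q J ltac:(lra)).
  assert (HaJ : 0 <= a * q ^ J <= 1) by nra.
  pose proof (qpoch_ge_geometric _ q n HaJ Hq).
  pose proof (pow_unit_interval q n ltac:(lra)).
  assert (a * q ^ J * (1 - q ^ n) / (1 - q) <= 1 / 2).
  { apply Rle_div_l; [lra|]. nra. }
  pose proof (qpoch_pos a q J Ha ltac:(lra)).
  apply Rle_trans with (qpoch a q (J + n)).
  + rewrite qpoch_add. nra.
  + rewrite Nat.add_comm. apply qpoch_add_le; lra.
Qed.

Lemma is_lim_seq_qpoch (a q : R) :
  0 <= a <= 1 -> 0 <= q <= 1 -> is_lim_seq (qpoch a q) (qpoch_inf a q).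
Proof.
intros Ha Hq. apply Lim_seq_correct'.
apply (ex_finite_lim_seq_decr _ 0).
- intros n. rewrite <- Nat.add_1_r. apply qpoch_add_le; assumption.
- intros n. apply qpoch_unit_interval; assumption.
Qed.

Lemma qpoch_inf_le (a q : R) (n : nat) :
  0 <= a <= 1 -> 0 <= q <= 1 -> qpoch_inf a q <= qpoch a q n.
Proof.
intros Ha Hq. apply (is_lim_seq_decr_compare (qpoch a q)).
- apply is_lim_seq_qpoch; assumption.
- intros m. rewrite <- Nat.add_1_r. apply qpoch_add_le; assumption.
Qed.

Lemma qpoch_inf_pos (a q : R) :
  0 <= a < 1 -> 0 <= q < 1 -> 0 < qpoch_inf a q.
Proof.
intros Ha Hq. destruct (qpoch_lower_bound a q Ha Hq) as [c [Hc Hlow]].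
assert (H := is_lim_seq_le _ _ _ _ Hlow (is_lim_seq_const c)
  (is_lim_seq_qpoch a q ltac:(lra) ltac:(lra))).
simpl in H. lra.
Qed.

Lemma qpoch_ge_fact (q : R) (k : nat) : 0 <= q <= 1 ->
  (1 - q) ^ k * INR (Factorial.fact k) * q ^ (k * k) <= q ^ k * qpoch q q k.
Proof.
intros Hq. induction k as [|k IH].
- simpl. lra.
- replace (S k * S k)%nat with (k * k + S (k + k))%nat by lia.
  rewrite fact_simpl, mult_INR, S_INR, pow_add. cbn [pow qpoch]. rewrite pow_add.
  pose proof (one_sub_pow_S_ge q k Hq) as Hstep. cbn [pow] in Hstep.
  pose proof (pow_unit_interval q k Hq). pose proof (pos_INR k).
  assert (HX : 0 <= (INR k + 1) * (1 - q) * q ^ k) by (apply Rmult_le_pos; nra).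
  assert (Hgrow : (INR k + 1) * (1 - q) * q ^ k * (q * q ^ k)
                  <= q * (1 - q * q ^ k)).
  { rewrite Rmult_comm. apply Rmult_le_compat; nra. }
  replace ((1 - q) * (1 - q) ^ k * ((INR k + 1) * INR (Factorial.fact k))
           * (q ^ (k * k) * (q * (q ^ k * q ^ k))))
    with ((1 - q) ^ k * INR (Factorial.fact k) * q ^ (k * k)
          * ((INR k + 1) * (1 - q) * q ^ k * (q * q ^ k))) by ring.
  replace (q * q ^ k * (qpoch q q k * (1 - q * q ^ k)))
    with (q ^ k * qpoch q q k * (q * (1 - q * q ^ k))) by ring.
  apply Rmult_le_compat;
    [| apply Rmult_le_pos; [exact HX | nra] | exact IH | exact Hgrow].
  apply Rmult_le_pos; [apply Rmult_le_pos; [apply pow_le; lra | apply pos_INR]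
                      | apply pow_le; lra].
Qed.

Lemma sum_pow_div_qpoch (q : R) (N : nat) : 0 <= q < 1 ->
  sum_f_R0 (fun k => q ^ k / qpoch q q k) N = / qpoch q q N.
Proof.
intros Hq. induction N as [|N IH]; simpl.
- field.
- rewrite IH.
  pose proof (qpoch_pos q q N Hq ltac:(lra)).
  pose proof (pow_unit_interval q N ltac:(lra)).
  field. nra.
Qed.

Lemma Cmod_A_term (q : R) (z : C) (k : nat) : 0 <= q < 1 ->
  Cmod (A_term q z k) = q ^ (k * k) / qpoch q q k * Cmod z ^ k.
Proof.
intros Hq. unfold A_term. rewrite Cmod_mult, Cmod_R, Cmod_pow, Cmod_opp.
rewrite Rabs_pos_eq; [reflexivity|].
pose proof (qpoch_pos q q k Hq ltac:(lra)).
apply Rle_mult_inv_pos; [apply pow_le; lra | assumption].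
Qed.

Lemma A_coef_le_exp_coef (q : R) (k : nat) : 0 <= q < 1 ->
  q ^ (k * k) / qpoch q q k <= (q / (1 - q)) ^ k / INR (Factorial.fact k).
Proof.
intros Hq.
pose proof (qpoch_pos q q k Hq ltac:(lra)).
pose proof (INR_fact_lt_0 k).
assert (0 < (1 - q) ^ k) by (apply pow_lt; lra).
unfold Rdiv. rewrite Rpow_mult_distr, pow_inv.
apply Rle_div_l; [assumption|].
replace (q ^ k * / (1 - q) ^ k * / INR (Factorial.fact k) * qpoch q q k)
  with (q ^ k * qpoch q q k / ((1 - q) ^ k * INR (Factorial.fact k)))
  by (field; lra).
apply Rle_div_r; [apply Rmult_lt_0_compat; assumption|].
rewrite Rmult_comm. apply qpoch_ge_fact; lra.
Qed.

Lemma pow_sq_mul_pow_le (q r : R) (k : nat) : 0 < q < 1 -> 0 < r ->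
  q ^ (k * k) * r ^ k
  <= q ^ k * (sqrt (r / sqrt q) * exp (- (ln r ^ 2) / (4 * ln q))).
Proof.
intros Hq Hr.
assert (HL : ln q < 0) by (rewrite <- ln_1; apply ln_increasing; lra).
pose proof (sqrt_lt_R0 q ltac:(lra)).
assert (Hrq : 0 < r / sqrt q) by (apply Rdiv_lt_0_compat; assumption).
rewrite <- (Rpower_sqrt _ Hrq), <- !Rpower_pow by lra. unfold Rpower.
rewrite ln_div, ln_sqrt, mult_INR, <- !exp_plus by lra.
apply exp_le_exp.
pose proof (quadratic_le_vertex (ln q) (ln r) (INR k) HL). lra.
Qed.

Lemma A_q_le_exp (q : R) (z : C) : 0 <= q < 1 ->
  Cmod (A_q q z) <= exp (q * Cmod z / (1 - q)).
Proof.
intros Hq. apply Cmod_series_parts_le. intros N.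
assert (Hr : 0 <= Cmod z) by apply Cmod_ge_0.
eapply Rle_trans; [| apply exp_ge_taylor].
2: { apply Rle_mult_inv_pos; [nra | lra]. }
apply sum_Rle. intros k _. rewrite Cmod_A_term by exact Hq.
replace (q * Cmod z / (1 - q)) with (q / (1 - q) * Cmod z) by (field; lra).
rewrite Rpow_mult_distr.
replace ((q / (1 - q)) ^ k * Cmod z ^ k / INR (Factorial.fact k))
  with ((q / (1 - q)) ^ k / INR (Factorial.fact k) * Cmod z ^ k)
  by (field; apply INR_fact_neq_0).
apply Rmult_le_compat_r; [apply pow_le; exact Hr |].
apply A_coef_le_exp_coef, Hq.
Qed.

Lemma A_q_le_gaussian (q : R) (z : C) : 0 < q < 1 -> z <> 0%C ->
  Cmod (A_q q z)
  <= sqrt (Cmod z / sqrt q) * exp (- (ln (Cmod z) ^ 2) / (4 * ln q)) / qpoch_inf q q.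
Proof.
intros Hq Hz. apply Cmod_series_parts_le. intros N.
assert (Hr : 0 < Cmod z) by (apply Cmod_gt_0; exact Hz).
set (M := sqrt (Cmod z / sqrt q) * exp (- (ln (Cmod z) ^ 2) / (4 * ln q))).
assert (HM : 0 <= M) by (apply Rmult_le_pos; [apply sqrt_pos | left; apply exp_pos]).
apply Rle_trans with (M * sum_f_R0 (fun k => q ^ k / qpoch q q k) N).
- rewrite scal_sum. apply sum_Rle. intros k _.
  rewrite Cmod_A_term by lra.
  pose proof (qpoch_pos q q k ltac:(lra) ltac:(lra)).
  replace (q ^ (k * k) / qpoch q q k * Cmod z ^ k)
    with (q ^ (k * k) * Cmod z ^ k / qpoch q q k) by (field; lra).
  replace (q ^ k / qpoch q q k * M) with (q ^ k * M / qpoch q q k) by (field; lra).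
  apply Rmult_le_compat_r; [left; apply Rinv_0_lt_compat; assumption |].
  apply pow_sq_mul_pow_le; assumption.
- rewrite sum_pow_div_qpoch by lra. unfold Rdiv.
  apply Rmult_le_compat_l; [exact HM |].
  apply Rinv_le_contravar; [apply qpoch_inf_pos | apply qpoch_inf_le]; lra.
Qed.

Theorem mainTheorem3 (q : R) (hq0 : 0 < q) (hq1 : q < 1) :
  (forall z : C, Cmod (A_q q z) <= exp (q * Cmod z / (1 - q))) /\
  (forall z : C, z <> 0%C ->
     Cmod (A_q q z) <=
       sqrt (Cmod z / sqrt q)
       * exp (- (ln (Cmod z) ^ 2) / (4 * ln q))
       / qpoch_inf q q).
Proof.
split.
- intros z. apply A_q_le_exp. lra.
- intros z Hz. apply A_q_le_gaussian; [lra | exact Hz].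
Qed.
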